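(* Let $P\subset\mathbb{R}^d$ be a finite point set whose minimum pairwise distance is $1$, and let $G$ be the final graph of the uncoordinated construction (described in the context) on $P$ with parameter $s>1$. Then for any two points $p,q\in P$ there is a path in $G$ between $p$ and $q$ of Euclidean length at most $\frac{s+1}{s-1}|pq|$ using at most $2|pq|^{1/(1+\lg s)}$ edges.
   Context: Fix $d\ge 1$; $|xy|$ is Euclidean distance; $\lg$ is logarithm base 2. Uncoordinated construction: start with the graph $G$ on vertex set $P$ with no edges. Every ordered pair $(p,q)$ of distinct points of $P$ is processed exactly once, in an arbitrary order, one at a time. When $(p,q)$ is processed, the edge $pq$ is added to $G$ unless $G$ currently contains an edge whose endpoints can be labeled $p',q'$ with $|pp'|\le |p'q'|/(2s+2)$ and $|qq'|\le |p'q'|/(2s+2)$. $G$ is the graph after all pairs are processed. *)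

From HB Require Import structures.
From mathcomp Require Import all_boot all_order all_algebra.
From mathcomp Require Import all_classical all_reals.
From mathcomp Require Import exp.
Set Implicit Arguments. Unset Strict Implicit. Unset Printing Implicit Defensive.
Import Order.TTheory GRing.Theory Num.Theory.
Local Open Scope ring_scope.

Section Defs.
Variables (R : realType) (d : nat).

Definition ptR := 'rV[R]_d.

Definition edist (x y : ptR) : R :=
  Num.sqrt (\sum_(i < d) (x ord0 i - y ord0 i) ^+ 2).

Definition lg (x : R) : R := ln x / ln 2.

Definition ordered_pairs (P : seq ptR) : seq (ptR * ptR) :=
  [seq (p, q) | p <- P, q <- [seq q <- P | p != q]].

Definition blocks (s : R) (p q : ptR) (e : ptR * ptR) : bool :=
  let close := fun p' q' =>
    (edist p p' <= edist p' q' / (2 * s + 2)) &&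
    (edist q q' <= edist p' q' / (2 * s + 2)) in
  close e.1 e.2 || close e.2 e.1.

Definition process (s : R) (G : seq (ptR * ptR)) (pq : ptR * ptR)
  : seq (ptR * ptR) :=
  if has (blocks s pq.1 pq.2) G then G else rcons G pq.

Definition uncoordinated (s : R) (order : seq (ptR * ptR))
  : seq (ptR * ptR) := foldl (process s) [::] order.

Definition adj (G : seq (ptR * ptR)) : rel ptR :=
  fun u v => ((u, v) \in G) || ((v, u) \in G).

Definition walk_length (x : ptR) (w : seq ptR) : R :=
  \sum_(e <- zip (x :: w) w) edist e.1 e.2.

End Defs.

(* Induct on |pq| over the finitely many pairs of P.  When (p, q) was processed,
   either pq became an edge, or an edge p'q' already in the graph (edges are never
   removed) blocked it.  In the second case the triangle inequality gives
   |p'q'| <= (1 + 1/s)|pq|, hence |pp'|, |qq'| <= |pq|/(2s) < |pq|, and the walks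
   p ~> p' and q' ~> q given by induction, joined by p'q', have length at most
   (s+1)/(s-1)|pq|.  The exponent a = 1/(1 + lg s) satisfies (2s)^a = 2, so each
   subwalk has at most 2(|pq|/(2s))^a - 1 = |pq|^a - 1 edges, and the invariant
   "at most 2|pq|^a - 1 edges" is preserved; it also covers a single edge because
   distinct points are at distance at least 1. *)

From HB Require Import structures.
From mathcomp Require Import all_boot all_order all_algebra.
From mathcomp Require Import all_classical all_reals.
From mathcomp Require Import exp.
From mathcomp Require Import ring lra.
Set Implicit Arguments. Unset Strict Implicit. Unset Printing Implicit Defensive.
Import Order.TTheory GRing.Theory Num.Theory.
Local Open Scope ring_scope.

Lemma cauchy_schwarz_sum (R : realFieldType) n (u v : 'I_n -> R) :
  (\sum_i u i * v i) ^+ 2 <= (\sum_i u i ^+ 2) * (\sum_i v i ^+ 2).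
Proof.
set A := \sum_i u i ^+ 2; set B := \sum_i v i ^+ 2; set C := \sum_i u i * v i.
have [A0|A_neq0] := eqVneq A 0.
  have u0 i : u i = 0 by apply/eqP; rewrite -sqrf_eq0 (psumr_eq0P (fun i _ => sqr_ge0 (u i)) A0).
  have -> : C = 0 by rewrite /C big1 // => i _; rewrite u0 mul0r.
  by rewrite A0 mul0r expr0n.
have A_gt0 : 0 < A.
  by rewrite lt_def A_neq0; apply: sumr_ge0 => i _; exact: sqr_ge0.
have : 0 <= \sum_i (A * v i - C * u i) ^+ 2 by apply: sumr_ge0 => i _; exact: sqr_ge0.
have -> : \sum_i (A * v i - C * u i) ^+ 2 = A * (A * B - C ^+ 2).
  rewrite (eq_bigr (fun i => A ^+ 2 * v i ^+ 2 - 2 * A * C * (u i * v i) + C ^+ 2 * u i ^+ 2));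
    last by move=> i _; ring.
  rewrite big_split sumrB /= -!mulr_sumr -/A -/B -/C; ring.
by rewrite pmulr_rge0 // subr_ge0 mulrC.
Qed.

Section EuclideanDistance.
Variables (R : realType) (d : nat).
Implicit Types x y z : ptR R d.

Lemma edist_ge0 x y : 0 <= edist x y.
Proof. exact: sqrtr_ge0. Qed.

Lemma edistxx x : edist x x = 0.
Proof. by rewrite /edist big1 ?sqrtr0 // => i _; rewrite subrr expr0n. Qed.

Lemma edistC x y : edist x y = edist y x.
Proof. by rewrite /edist; congr Num.sqrt; apply: eq_bigr => i _; rewrite -sqrrN opprB. Qed.

Lemma edist_triangle x y z : edist x z <= edist x y + edist y z.
Proof.
rewrite /edist; set u := fun i => x ord0 i - y ord0 i; set v := fun i => y ord0 i - z ord0 i.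
have sqr_sum_ge0 (w : 'I_d -> R) : 0 <= \sum_i w i ^+ 2 by apply: sumr_ge0 => i _; exact: sqr_ge0.
have CS := cauchy_schwarz_sum u v.
set a := Num.sqrt (\sum_i u i ^+ 2); set b := Num.sqrt (\sum_i v i ^+ 2).
have a_ge0 : 0 <= a := sqrtr_ge0 _.
have b_ge0 : 0 <= b := sqrtr_ge0 _.
rewrite -(sqr_sqrtr (sqr_sum_ge0 u)) -(sqr_sqrtr (sqr_sum_ge0 v)) -/a -/b in CS.
rewrite -[a + b]ger0_norm ?addr_ge0 // -sqrtr_sqr ler_sqrt ?sqr_ge0 //.
have -> : \sum_i (x ord0 i - z ord0 i) ^+ 2 =
    \sum_i u i ^+ 2 + 2 * \sum_i u i * v i + \sum_i v i ^+ 2.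
  by rewrite mulr_sumr -!big_split /=; apply: eq_bigr => i _; rewrite /u /v; ring.
have C_le_ab : \sum_i u i * v i <= a * b.
  rewrite leNgt; apply/negP => ab_lt_C.
  have := ltr_pM (mulr_ge0 a_ge0 b_ge0) (mulr_ge0 a_ge0 b_ge0) ab_lt_C ab_lt_C.
  by rewrite -!expr2 exprMn ltNge CS.
rewrite -(sqr_sqrtr (sqr_sum_ge0 u)) -(sqr_sqrtr (sqr_sum_ge0 v)) -/a -/b sqrrD; lra.
Qed.

End EuclideanDistance.

Lemma sub_count_lt (T : Type) (a1 a2 : pred T) (r : seq T) :
  subpred a1 a2 -> has (predD a2 a1) r -> (count a1 r < count a2 r)%N.
Proof.
move=> sub12; rewrite has_count => pos.
have := count_predUI a1 (predD a2 a1) r.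
have -> : count (predU a1 (predD a2 a1)) r = count a2 r.
  by apply: eq_count => x /=; case a1x: (a1 x); rewrite ?(sub12 x a1x).
have -> : count (predI a1 (predD a2 a1)) r = 0%N.
  by rewrite (eq_count (a2 := pred0)) ?count_pred0 // => x /=; case: (a1 x).
by rewrite addn0 => ->; rewrite -addn1 leq_add2l.
Qed.

Lemma finite_measure_ind (T : eqType) (disp : Order.disp_t) (U : porderType disp)
    (f : T -> U) (r : seq T) (Q : T -> Prop) :
  {in r, forall x, {in r, forall y, (f y < f x)%O -> Q y} -> Q x} ->
  {in r, forall x, Q x}.
Proof.
move=> IH; pose m x := count (fun y => (f y < f x)%O) r.
suff Qm n : {in r, forall x, (m x < n)%N -> Q x} by move=> x xr; exact: Qm xr (ltnSn _).
elim: n => // n IHn x xr mx; apply: IH => // y yr fyx; apply: IHn => //.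
rewrite -ltnS (leq_trans _ mx) // ltnS; apply: sub_count_lt.
  by move=> z /= fzy; exact: lt_trans fzy fyx.
by apply/hasP; exists y; rewrite //= ltxx fyx.
Qed.

Section Construction.
Variables (R : realType) (d : nat) (s : R).
Local Notation T := (ptR R d).
Implicit Types (G : seq (T * T)) (p q : T) (pq : T * T).

Definition handled G p q := adj G p q || has (blocks s p q) G.

Lemma handled_subset G G' p q : {subset G <= G'} -> handled G p q -> handled G' p q.
Proof.
move=> sub /orP[/orP[pq_in|qp_in]|/hasP[e eG pq_e]]; apply/orP.
- by left; rewrite /adj sub.
- by left; rewrite /adj (sub _ qp_in) orbT.
- by right; apply/hasP; exists e; rewrite ?sub.
Qed.

Lemma process_subset G pq : {subset G <= process s G pq}.
Proof. by rewrite /process; case: ifP => _ e eG //; rewrite mem_rcons inE eG orbT. Qed.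

Lemma handled_process G pq : handled (process s G pq) pq.1 pq.2.
Proof.
rewrite /process /handled; case: ifP => [->|_]; first by rewrite orbT.
by rewrite /adj mem_rcons inE -surjective_pairing eqxx.
Qed.

Lemma foldl_process_subset G order : {subset G <= foldl (process s) G order}.
Proof.
elim: order G => [|pq order IH] G e eG //=; apply: IH; exact: process_subset.
Qed.

Lemma foldl_process_handled G order pq :
  pq \in order -> handled (foldl (process s) G order) pq.1 pq.2.
Proof.
elim: order G => //= pq' order IH G; rewrite inE => /orP[/eqP->|pq_in]; last exact: IH.
apply: handled_subset (handled_process _ _); exact: foldl_process_subset.
Qed.

Lemma foldl_process_edges G order : {subset foldl (process s) G order <= G ++ order}.
Proof.
elim: order G => [|pq order IH] G e /=; first by rewrite cats0.
move/IH; rewrite !mem_cat inE /process; case: ifP => _; first by case/orP=> ->; rewrite ?orbT.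
by rewrite mem_rcons inE; case/orP=> [/orP[]|] ->; rewrite ?orbT.
Qed.

Lemma mem_ordered_pairs (P : seq T) p q :
  ((p, q) \in ordered_pairs P) = [&& p \in P, q \in P & p != q].
Proof.
apply/allpairsPdep/and3P.
  by case=> x [y [xP]]; rewrite mem_filter => /andP[xy yP] [-> ->].
by case=> pP qP pq; exists p, q; rewrite mem_filter pq qP.
Qed.

End Construction.

Section Walks.
Variables (R : realType) (d : nat).
Implicit Types x y : ptR R d.

Lemma walk_length_nil x : walk_length x [::] = 0.
Proof. by rewrite /walk_length big_nil. Qed.

Lemma walk_length_cons x y w : walk_length x (y :: w) = edist x y + walk_length y w.
Proof. by rewrite /walk_length /= big_cons. Qed.

Lemma walk_length_cat x w1 w2 :
  walk_length x (w1 ++ w2) = walk_length x w1 + walk_length (last x w1) w2.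
Proof.
elim: w1 x => [|y w1 IH] x /=; first by rewrite walk_length_nil add0r.
by rewrite !walk_length_cons IH addrA.
Qed.

End Walks.

Definition stretch (R : realType) (s : R) := (s + 1) / (s - 1).
Definition hop_exponent (R : realType) (s : R) := 1 / (1 + lg s).

Section Blocker.
Variables (R : realType) (d : nat) (s : R) (p q p' q' : ptR R d).

Lemma edist_detour : edist p' q' <= edist p p' + edist p q + edist q q'.
Proof.
apply: le_trans (edist_triangle p' p q') _; rewrite edistC -addrA lerD2l.
exact: edist_triangle.
Qed.

Lemma blocker_near : 0 < s ->
    edist p p' <= edist p' q' / (2 * s + 2) -> edist q q' <= edist p' q' / (2 * s + 2) ->
  edist p p' <= edist p q / (2 * s) /\ edist q q' <= edist p q / (2 * s).
Proof.
move: edist_detour (edist_ge0 p p') (edist_ge0 q q').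
set A := edist p p'; set B := edist q q'; set C := edist p' q'; set D := edist p q.
move=> detour A_ge0 B_ge0 s_gt0 nearA nearB.
have s2_gt0 : 0 < 2 * s + 2 by lra.
rewrite ler_pdivlMr // in nearA; rewrite ler_pdivlMr // in nearB.
have C_le : C * (2 * s) <= D * (2 * s + 2) by nra.
suff near X : X * (2 * s + 2) <= C -> X <= D / (2 * s) by split; apply: near.
move=> X_le; rewrite ler_pdivlMr ?mulr_gt0 // -(ler_pM2r s2_gt0) mulrAC.
by apply: le_trans C_le; rewrite ler_wpM2r ?mulr_ge0 ?(ltW s_gt0).
Qed.

Lemma blocker_walk_length : 1 < s ->
    edist p p' <= edist p' q' / (2 * s + 2) -> edist q q' <= edist p' q' / (2 * s + 2) ->
  stretch s * edist p p' + (edist p' q' + stretch s * edist q q') <= stretch s * edist p q.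
Proof.
move: edist_detour (edist_ge0 p p') (edist_ge0 q q').
set A := edist p p'; set B := edist q q'; set C := edist p' q'; set D := edist p q.
move=> detour A_ge0 B_ge0 s_gt1 nearA nearB; set t := stretch s.
have s2_gt0 : 0 < 2 * s + 2 by lra.
rewrite ler_pdivlMr // in nearA; rewrite ler_pdivlMr // in nearB.
have s1_gt0 : 0 < s - 1 by lra.
have key : (s + 1) * (A + B) + (s - 1) * C <= (s + 1) * D by nra.
have st : (s - 1) * t = s + 1 by rewrite /t mulrC divfK ?gt_eqF.
rewrite -(ler_pM2l s1_gt0) mulrA st.
have -> : (s - 1) * (t * A + (C + t * B)) = (s - 1) * t * (A + B) + (s - 1) * C by ring.
by rewrite st.
Qed.

End Blocker.

Section Spanner.
Variables (R : realType) (d : nat) (s : R).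
Hypothesis s_gt1 : 1 < s.
Local Notation T := (ptR R d).
Local Notation t := (stretch s).
Local Notation alpha := (hop_exponent s).
Implicit Types (p q : T) (w : seq T).

Let s_gt0 : 0 < s := lt_trans ltr01 s_gt1.

Lemma stretch_ge1 : 1 <= t.
Proof. by rewrite /stretch ler_pdivlMr ?subr_gt0 // mul1r; lra. Qed.

Lemma hop_exponent_gt0 : 0 < alpha.
Proof.
have ln2_gt0 : 0 < ln (2 : R) by rewrite ln_gt0 // ltr1n.
by rewrite divr_gt0 // addr_gt0 // /lg divr_gt0 // ln_gt0.
Qed.

Lemma powR_hop_exponent_2s : powR (2 * s) alpha = 2.
Proof.
have ln2_gt0 : 0 < ln (2 : R) by rewrite ln_gt0 // ltr1n.
have lns_gt0 : 0 < ln s by rewrite ln_gt0.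
rewrite /powR gt_eqF ?mulr_gt0 ?s_gt0 // lnM ?posrE ?s_gt0 //.
have -> : alpha * (ln 2 + ln s) = ln (2 : R).
  by rewrite /hop_exponent /lg; field; rewrite !gt_eqF // addr_gt0 // divr_gt0.
by rewrite lnK // posrE.
Qed.

Lemma powR_hop_exponent_ge1 D : 1 <= D -> 1 <= powR D alpha.
Proof.
move=> D_ge1; have := ge0_ler_powR (ltW hop_exponent_gt0) _ _ D_ge1.
by rewrite powR1 => ->; rewrite ?nnegrE // (le_trans ler01).
Qed.

Lemma hops_le_half w X D : 0 <= X -> X <= D / (2 * s) -> 1 <= D ->
  w = [::] \/ (size w)%:R + 1 <= 2 * powR X alpha ->
  (size w)%:R + 1 <= powR D alpha.
Proof.
move=> X_ge0 X_le D_ge1 [->|hops]; first by rewrite add0r powR_hop_exponent_ge1.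
apply: le_trans hops _.
have s2_gt0 : 0 < 2 * s by rewrite mulr_gt0 ?s_gt0.
have D_ge0 : 0 <= D := le_trans ler01 D_ge1.
rewrite -(divfK (lt0r_neq0 s2_gt0) D) powRM ?divr_ge0 ?(ltW s2_gt0) //.
rewrite powR_hop_exponent_2s mulrC ler_pM2r // ge0_ler_powR ?nnegrE //.
  exact: ltW hop_exponent_gt0.
by rewrite divr_ge0 ?(ltW s2_gt0).
Qed.

Variable G : seq (T * T).

(* The empty walk is exempt from the hop bound: for [p = q] it would read [1 <= 0]. *)
Definition spanner_walk p q w :=
  [/\ path (adj G) p w, last p w = q, walk_length p w <= t * edist p q
    & w = [::] \/ (size w)%:R + 1 <= 2 * powR (edist p q) alpha].

Lemma spanner_walk_nil p : spanner_walk p p [::].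
Proof. by split; [|by []|rewrite walk_length_nil edistxx mulr0|left]. Qed.

Lemma spanner_walk_edge p q : adj G p q -> 1 <= edist p q -> spanner_walk p q [:: q].
Proof.
move=> pq D_ge1; split; rewrite /= ?pq //.
  rewrite walk_length_cons walk_length_nil addr0 -[X in X <= _]mul1r.
  by rewrite ler_wpM2r ?edist_ge0 ?stretch_ge1.
by right; have := powR_hop_exponent_ge1 D_ge1; lra.
Qed.

Lemma spanner_walk_blocked p q p' q' w1 w2 :
  1 <= edist p q -> adj G p' q' ->
  edist p p' <= edist p' q' / (2 * s + 2) -> edist q q' <= edist p' q' / (2 * s + 2) ->
  spanner_walk p p' w1 -> spanner_walk q' q w2 -> spanner_walk p q (w1 ++ q' :: w2).
Proof.
move=> D_ge1 p'q' near_p near_q [walk1 last1 len1 hops1] [walk2 last2 len2 hops2].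
have [near_p' near_q'] := blocker_near s_gt0 near_p near_q.
rewrite edistC in len2 hops2.
split.
- by rewrite cat_path walk1 last1 /= p'q'.
- by rewrite last_cat last1.
- rewrite walk_length_cat last1 walk_length_cons.
  apply: le_trans (blocker_walk_length s_gt1 near_p near_q).
  by rewrite lerD // lerD2l.
- right; rewrite size_cat /= -addn1 !natrD.
  have := hops_le_half (edist_ge0 _ _) near_p' D_ge1 hops1.
  have := hops_le_half (edist_ge0 _ _) near_q' D_ge1 hops2.
  lra.
Qed.

End Spanner.

Section UncoordinatedSpanner.
Variables (R : realType) (d : nat) (s : R).
Variables (P : seq (ptR R d)) (G : seq (ptR R d * ptR R d)).
Hypothesis s_gt1 : 1 < s.
Hypothesis edist_ge1 : {in P &, forall p q, p != q -> 1 <= edist p q}.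
Hypothesis handledP : {in P &, forall p q, p != q -> handled s G p q}.
Hypothesis edgesP : {in G, forall e, (e.1 \in P) && (e.2 \in P)}.

Let s_gt0 : 0 < s := lt_trans ltr01 s_gt1.

Lemma spanner_walk_exists : {in P &, forall p q, exists w, spanner_walk s G p q w}.
Proof.
pose Q pq := exists w, spanner_walk s G pq.1 pq.2 w.
suff QP : {in [seq (x, y) | x <- P, y <- P], forall pq, Q pq}.
  by move=> p q pP qP; apply: (QP (p, q)); exact: allpairs_f.
apply: (finite_measure_ind (f := fun pq => edist pq.1 pq.2)) => pq0.
case/allpairsP=> -[x y] [/= xP yP ->] {pq0} IH.
have [<-|xy] := eqVneq x y; first by exists [::]; exact: spanner_walk_nil.
have D_ge1 := edist_ge1 xP yP xy.
have shorter x' y' : x' \in P -> y' \in P -> edist x' y' <= edist x y / (2 * s) -> Q (x', y').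
  move=> x'P y'P le; apply: (IH (x', y')); first exact: allpairs_f.
  apply: le_lt_trans le _; rewrite ltr_pdivrMr ?mulr_gt0 //.
  rewrite ltr_pMr; first by have := s_gt1; lra.
  exact: lt_le_trans ltr01 D_ge1.
have blocked u v : adj G u v -> u \in P -> v \in P ->
    edist x u <= edist u v / (2 * s + 2) -> edist y v <= edist u v / (2 * s + 2) ->
  Q (x, y).
  move=> uv uP vP near_x near_y.
  have [near_u near_v] := blocker_near s_gt0 near_x near_y.
  have [w1 walk1] := shorter x u xP uP near_u.
  have [w2 walk2] : Q (v, y) by apply: shorter; rewrite // edistC.
  exists (w1 ++ v :: w2); exact: (spanner_walk_blocked s_gt1 D_ge1 uv near_x near_y walk1 walk2).
case/orP: (handledP xP yP xy) => [xy_adj|/hasP[[a b] abG]].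
  by exists [:: y]; exact: spanner_walk_edge.
have /andP[aP bP] := edgesP abG.
by case/orP=> /andP[]; apply: blocked; rewrite // /adj abG ?orbT.
Qed.

End UncoordinatedSpanner.

Theorem theorem12 (R : realType) (d : nat) (hd : (1 <= d)%N)
  (P : seq (ptR R d)) (huniq : uniq P)
  (hmin : forall p q, p \in P -> q \in P -> p != q -> 1 <= edist p q)
  (hattain : exists p q, [/\ p \in P, q \in P, p != q & edist p q = 1])
  (s : R) (hs : 1 < s)
  (order : seq (ptR R d * ptR R d))
  (horder : perm_eq order (ordered_pairs P)) :
  let G := uncoordinated s order in
  forall p q, p \in P -> q \in P ->
  exists w : seq (ptR R d),
    [/\ path (adj G) p w, last p w = q,
        walk_length p w <= (s + 1) / (s - 1) * edist p q
      & (size w)%:R <= 2 * powR (edist p q) (1 / (1 + lg s))].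
Proof.
move=> G p q pP qP.
have handledP : {in P &, forall x y, x != y -> handled s G x y}.
  move=> x y xP yP xy; apply: (@foldl_process_handled _ _ _ _ _ (x, y)).
  by rewrite (perm_mem horder) mem_ordered_pairs xP yP xy.
have edgesP : {in G, forall e, (e.1 \in P) && (e.2 \in P)}.
  move=> [x y] /foldl_process_edges; rewrite cat0s (perm_mem horder).
  by rewrite mem_ordered_pairs => /and3P[-> ->].
have [w [walk_w last_w len_w hops_w]] := spanner_walk_exists hs hmin handledP edgesP pP qP.
exists w; split => //; case: hops_w => [->|hops_w]; first by rewrite mulr_ge0 ?powR_ge0.
by apply: le_trans hops_w; rewrite lerDl.
Qed.
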